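(* For every integer $n>1$, $\mathrm{DE3}(n+2)+\mathrm{DE3}(n-1)$ equals the number of partitions of $n$ into parts none of which is divisible by $4$.
   Context: For a nonnegative integer $n$, $\mathrm{DE3}(n)$ denotes the number of partitions of $n$ in which no even part is repeated, and the largest part is odd and appears exactly once (so $\mathrm{DE3}(0)=0$). Equivalently, $\sum_{n\ge0}\mathrm{DE3}(n)q^n=\sum_{n\ge0}\frac{(-q^2;q^2)_n q^{2n+1}}{(q;q^2)_{n}}$, where $(a;q)_0=1$ and $(a;q)_n=\prod_{j=0}^{n-1}(1-aq^j)$. *)

(* Integer partitions represented as nonincreasing sequences
   of positive naturals. *)
From mathcomp Require Import all_boot.
Set Implicit Arguments. Unset Strict Implicit. Unset Printing Implicit Defensive.

Fixpoint seqs_upto (k : nat) (A : seq nat) : seq (seq nat) :=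
  match k with
  | 0 => [:: [::]]
  | k'.+1 => [::] :: [seq x :: s | x <- A, s <- seqs_upto k' A]
  end.

Definition is_partition (n : nat) (s : seq nat) : bool :=
  [&& all (fun x => 0 < x) s, sorted geq s & sumn s == n].

(* The (duplicate-free) list of all partitions of n: every partition of n has
   at most n parts, each in 1..n. *)
Definition partitions (n : nat) : seq (seq nat) :=
  undup [seq s <- seqs_upto n (iota 1 n) | is_partition n s].

Definition de3_cond (s : seq nat) : bool :=
  [&& all (fun x => ~~ odd x ==> (count_mem x s <= 1)) s,
      s != [::],
      odd (head 0 s) & count_mem (head 0 s) s == 1].

Definition DE3 (n : nat) : nat := count de3_cond (partitions n).

Definition p_no4 (n : nat) : nat :=
  count (fun s => all (fun x => ~~ (4 %| x)) s) (partitions n).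

Example DE3_0 : DE3 0 = 0. Proof. by []. Qed.
Example chk : DE3 5 + DE3 2 = p_no4 3. Proof. by vm_compute. Qed.
Example chk2 : DE3 6 + DE3 3 = p_no4 4. Proof. by vm_compute. Qed.

(* Let ue(n) be the number of partitions of n in which no even part is
   repeated.

   First, ue(n) = DE3(n + 2) + DE3(n - 1).  Sort these partitions by their
   largest part a.  If a is odd, adding 2 to it gives a DE3 partition of n + 2
   whose largest part L is the only part >= L - 1.  If a is even and a - 1 is
   a part, then a - 1 is the second part, and adding 1 to both gives a DE3
   partition of n + 2 with a part L - 1.  If a is even and a - 1 is not a
   part, lowering a by 1 gives a DE3 partition of n - 1, and every one of
   them arises this way.

   Second, ue(n) = p_no4(n).  Let A_j and E_j be the generating functions of
   the partitions with parts at most j and no part divisible by 4, resp. no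
   even part repeated.  As power series A_j = (q^4;q^4)_{j/4} / (q;q)_j and
   E_j = (q^4;q^4)_{j/2} / (q;q)_j, hence
     A_j (q^4;q^4)_{j/2} = E_j (q^4;q^4)_{j/4}.
   This is proved modulo X^M by induction on j, using only the recurrences
   obtained by removing a largest part j.  For j = n and M = n + 1 the factors
   of (q^4;q^4)_{n/2} of degree above n disappear, and cancelling
   (q^4;q^4)_{n/4}, whose constant term is 1, leaves A_n = E_n mod X^(n+1). *)

From mathcomp Require Import all_boot all_algebra zify ring.
From Stdlib Require Import Setoid Morphisms.
Set Implicit Arguments. Unset Strict Implicit. Unset Printing Implicit Defensive.
Import GRing.Theory.

Lemma count_bij (T U : eqType) (s : seq T) (t : seq U) (P : pred T) (Q : pred U)
    (f : T -> U) (g : U -> T) :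
  uniq s -> uniq t ->
  (forall x, x \in s -> P x -> [/\ f x \in t, Q (f x) & g (f x) = x]) ->
  (forall y, y \in t -> Q y -> [/\ g y \in s, P (g y) & f (g y) = y]) ->
  count P s = count Q t.
Proof.
move=> us ut fPQ gQP; rewrite -!size_filter -(size_map f).
have fK : {in filter P s, cancel f g}.
  by move=> x; rewrite mem_filter => /andP[Px xs]; case: (fPQ x xs Px).
apply/perm_size/uniq_perm.
- by rewrite (map_inj_in_uniq (can_in_inj fK)) filter_uniq.
- exact: filter_uniq.
- move=> y; rewrite mem_filter; apply/mapP/andP => [[x] | [Qy yt]].
    by rewrite mem_filter => /andP[Px xs] ->; case: (fPQ x xs Px).
  by case: (gQP y yt Qy) => gys Pgy gyK; exists (g y); rewrite ?mem_filter ?Pgy.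
Qed.

Lemma count_split (T : Type) (a b : pred T) s :
  count a s = count (predI a b) s + count (predI a (predC b)) s.
Proof. by elim: s => //= x s ->; case: (a x) (b x) => [] [] /=; rewrite ?addnS ?addSn. Qed.

Lemma uniq_filterE (T : eqType) (P : pred T) s :
  uniq (filter P s) = all (fun x => P x ==> (count_mem x s <= 1)) s.
Proof.
have countE x : count_mem x (filter P s) = if P x then count_mem x s else 0.
  rewrite count_filter; case: ifP => Px; last rewrite -(count_pred0 s);
  by apply: eq_count => y /=; case: eqP => // ->; rewrite Px.
apply/idP/allP => [us x xs | le1].
  by apply/implyP => Px; move: (countE x); rewrite Px count_uniq_mem // => <-; exact: leq_b1.
apply: count_mem_uniq => x; rewrite countE mem_filter.
case Px: (P x) => //=; case: (boolP (x \in s)) => [xs | /count_memPn //].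
by apply/eqP; rewrite eqn_leq (implyP (le1 x xs) Px) -has_count has_pred1.
Qed.

Lemma mem_seqs_upto k A s :
  size s <= k -> all (fun x => x \in A) s -> s \in seqs_upto k A.
Proof.
elim: k s => [|k IH] [|x s] //= sk /andP[xA sA].
by rewrite inE (allpairs_f (fun x s => x :: s)) ?orbT ?IH.
Qed.

Lemma size_leq_sumn s : all (fun x => 0 < x) s -> size s <= sumn s.
Proof. by elim: s => //= x s IH /andP[x0 /IH]; lia. Qed.

Lemma mem_leq_sumn s x : x \in s -> x <= sumn s.
Proof. by elim: s => //= y s IH; rewrite inE => /orP[/eqP-> | /IH]; lia. Qed.

Lemma mem_partitions m s : (s \in partitions m) = is_partition m s.
Proof.
rewrite mem_undup mem_filter andb_idr // => /and3P[s_pos _ /eqP <-].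
apply: mem_seqs_upto; first exact: size_leq_sumn.
by apply/allP => x xs; rewrite mem_iota (allP s_pos) //= add1n ltnS mem_leq_sumn.
Qed.

Lemma count_partitions_bij m m' (P Q : pred (seq nat)) f g :
  (forall s, is_partition m s -> P s -> [/\ is_partition m' (f s), Q (f s) & g (f s) = s]) ->
  (forall t, is_partition m' t -> Q t -> [/\ is_partition m (g t), P (g t) & f (g t) = t]) ->
  count P (partitions m) = count Q (partitions m').
Proof.
move=> fPQ gQP; apply: (count_bij (f := f) (g := g)); rewrite ?undup_uniq // => x.
  by rewrite !mem_partitions; exact: fPQ.
by rewrite !mem_partitions; exact: gQP.
Qed.

Lemma is_partition_cons m a r :
  is_partition m (a :: r) =
  [&& 0 < a, all (fun x => x <= a) r, is_partition (sumn r) r & m == a + sumn r].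
Proof.
rewrite /is_partition /= path_sortedE; last by move=> x y z /= ? ?; lia.
by rewrite eqxx andbT eq_sym -!andbA; congr andb; apply: andbCA.
Qed.

Lemma is_partition_cons2 m a b r :
  is_partition m (a :: b :: r) =
  [&& 0 < b <= a, all (fun x => x <= b) r, is_partition (sumn r) r & m == a + b + sumn r].
Proof.
rewrite !is_partition_cons /= eqxx andbT -addnA; apply/idP/idP.
  by case/and4P => _ /andP[ba _] /and3P[-> -> ->] ->; rewrite ba.
case/and4P => /andP[b0 ba] rb -> ->; rewrite b0 ba rb (leq_trans b0 ba) /= andbT.
by move: rb; apply: sub_all => x /= xb; apply: leq_trans xb ba.
Qed.

Lemma second_part_pred m a b r :
  is_partition m (a :: b :: r) -> a \notin b :: r -> a.-1 \in b :: r -> b = a.-1.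
Proof.
rewrite is_partition_cons2 !inE negb_or => /and4P[/andP[b0 ba] rb _ _] /andP[ab _].
by case/orP => [/eqP // | /(allP rb)]; lia.
Qed.

Lemma all_leq_notin a b r : all (fun x => x <= a) r -> a < b -> b \notin r.
Proof. by move=> /allP ra ab; apply/negP => /ra; lia. Qed.

Lemma all_leq_pred j s :
  0 < j -> all (fun x => x <= j) s && (j \notin s) = all (fun x => x <= j.-1) s.
Proof.
move=> j0; elim: s => //= x s <-; rewrite inE negb_or.
case: (ltngtP x j) => [xj | jx | ->] /=.
- by rewrite (_ : x <= j.-1) //; lia.
- by rewrite (_ : x <= j.-1 = false) //; lia.
- by rewrite (_ : j <= j.-1 = false) ?andbF //; lia.
Qed.

Definition uniq_even_parts (s : seq nat) := uniq [seq x <- s | ~~ odd x].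

Lemma uniq_even_parts_cons a r :
  uniq_even_parts (a :: r) = (~~ odd a ==> (a \notin r)) && uniq_even_parts r.
Proof. by rewrite /uniq_even_parts /=; case oa: (odd a); rewrite //= mem_filter oa. Qed.

Lemma de3_cond_cons a r : de3_cond (a :: r) = [&& odd a, a \notin r & uniq_even_parts r].
Proof.
rewrite /de3_cond -uniq_filterE -/(uniq_even_parts _) uniq_even_parts_cons /=.
rewrite eqxx add1n eqSS -[count_mem a r == 0]negbK -lt0n -has_count has_pred1.
by case: (odd a); rewrite //= andbC.
Qed.

Lemma count_shift_head m d (P Q : pred (seq nat)) :
  0 < d -> P [::] = false ->
  (forall a r, is_partition m (a :: r) -> P (a :: r) -> Q ((a + d) :: r)) ->
  (forall b r, is_partition (m + d) (b :: r) -> Q (b :: r) ->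
     [&& d < b, all (fun x => x <= b - d) r & P ((b - d) :: r)]) ->
  count P (partitions m) = count Q (partitions (m + d)).
Proof.
move=> d0 P0 PQ QP.
apply: (count_partitions_bij (f := fun s => if s is a :: r then (a + d) :: r else s)
                             (g := fun t => if t is b :: r then (b - d) :: r else t)).
  case=> [|a r]; rewrite ?P0 // => pm Pa; split; rewrite ?addnK ?PQ //.
  move: pm; rewrite !is_partition_cons => /and4P[a0 ra -> /eqP->].
  rewrite addn_gt0 a0 addnAC eqxx /= andbT; move: ra; apply: sub_all => x /=; lia.
case=> [|b r]; first by case/and3P => _ _; rewrite eq_sym addn_eq0 (gtn_eqF d0) andbF.
move=> pm /(QP _ _ pm) /and3P[db rb Pb]; split; rewrite ?subnK ?(ltnW db) //.
move: pm; rewrite !is_partition_cons rb => /and4P[_ _ -> /eqP mE] /=.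
by rewrite subn_gt0 db /=; apply/eqP; lia.
Qed.

Lemma count_odd_head m :
  count (fun s => uniq_even_parts s && odd (head 0 s)) (partitions m) =
  count (fun t => de3_cond t && ((head 0 t).-1 \notin t)) (partitions (m + 2)).
Proof.
apply: count_shift_head => // [a r | b r].
  rewrite is_partition_cons uniq_even_parts_cons.
  move=> /and4P[_ ra _ _] /andP[/andP[_ er] oa].
  by rewrite de3_cond_cons addn2 /= inE negb_or er !(all_leq_notin ra) ?andbT //=; lia.
rewrite is_partition_cons de3_cond_cons /= inE negb_or.
move=> /and4P[b0 rb rpart /eqP mE] /andP[/and3P[ob br er] /andP[_ b1r]].
have b3 : 2 < b.
  case: r rpart rb br b1r mE {er} => [|x r] /=; first lia.
  rewrite !inE !negb_or => /and3P[/andP[x0 _] _ _] /andP[xb _].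
  by move=> /andP[bx _] /andP[b1x _]; lia.
have rb2 : all (fun x => x <= b - 2) r.
  by rewrite (_ : b - 2 = b.-1.-1); [rewrite -!all_leq_pred ?rb ?br ?b1r // | ]; lia.
by rewrite uniq_even_parts_cons er b3 rb2 /= andbT; lia.
Qed.

Lemma count_even_head_pred_notin m :
  count de3_cond (partitions m) =
  count (fun s => uniq_even_parts s && ~~ odd (head 0 s) && ((head 0 s).-1 \notin s))
        (partitions (m + 1)).
Proof.
apply: count_shift_head => // [a r | b r].
  rewrite is_partition_cons de3_cond_cons => /and4P[_ ra _ _] /and3P[oa ar er].
  rewrite uniq_even_parts_cons addn1 /= inE negb_or ar er (all_leq_notin ra) ?andbT //=.
  lia.
rewrite is_partition_cons uniq_even_parts_cons /= inE negb_or subn1.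
move=> /and4P[b0 rb _ _] /andP[/andP[/andP[/implyP br er] eb] /andP[_ b1r]].
by rewrite de3_cond_cons -all_leq_pred // rb (br eb) b1r er /= !andbT; lia.
Qed.

Lemma count_even_head_pred_mem m :
  count (fun s => uniq_even_parts s && ~~ odd (head 0 s) && ((head 0 s).-1 \in s))
        (partitions m) =
  count (fun t => de3_cond t && ((head 0 t).-1 \in t)) (partitions (m + 2)).
Proof.
apply: (count_partitions_bij
  (f := fun s => if s is a :: b :: r then a.+1 :: b.+1 :: r else s)
  (g := fun t => if t is a :: b :: r then a.-1 :: b.-1 :: r else t)).
- case=> [|a [|b r]] //.
    by rewrite /is_partition /= inE => /andP[/andP[a0 _] _] /andP[_ /eqP]; lia.
  move=> pm /andP[/andP[e /= ea] /= a1]; move: (pm) e.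
  rewrite is_partition_cons2 !uniq_even_parts_cons ea /=.
  move=> /and4P[/andP[b0 ba] rb rp /eqP mE] /andP[ab /andP[_ er]].
  have bE : b = a.-1.
    by apply: second_part_pred pm ab _; move: a1; rewrite inE => /orP[/eqP|//]; lia.
  subst b; rewrite prednK; last lia.
  split=> //.
    rewrite is_partition_cons2 rp leqnSn /=; apply/and3P; split; [lia | | apply/eqP; lia].
    by move: rb; apply: sub_all => x /=; lia.
  rewrite de3_cond_cons uniq_even_parts_cons /= ea er !inE negb_or eqxx orbT.
  by rewrite !(all_leq_notin rb) ?andbT //=; lia.
- case=> [|L [|c r]] //.
    by rewrite de3_cond_cons /= inE => _ /andP[/andP[oL _] /eqP]; lia.
  move=> pm /andP[]; rewrite de3_cond_cons uniq_even_parts_cons /=.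
  move=> /and3P[oL Lcr /andP[ec er]] L1.
  have cE : c = L.-1.
    by apply: second_part_pred pm Lcr _; move: L1; rewrite inE => /orP[/eqP|//]; lia.
  subst c; move: (pm); rewrite is_partition_cons2 => /and4P[/andP[c0 _] rb rp /eqP mE].
  have Lr : L.-1 \notin r by apply: (implyP ec); lia.
  split; last by rewrite !prednK //; lia.
    rewrite is_partition_cons2 rp -all_leq_pred ?rb ?Lr //= leq_pred andbT.
    by apply/andP; split; [lia | apply/eqP; lia].
  by rewrite !uniq_even_parts_cons er !inE negb_or Lr eqxx orbT /= !andbT; lia.
Qed.

Lemma count_uniq_even_parts_DE3 n :
  0 < n -> count uniq_even_parts (partitions n) = DE3 (n + 2) + DE3 (n - 1).
Proof.
move=> n0; have := count_even_head_pred_notin (n - 1); rewrite subnK // => E3.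
rewrite /DE3 (count_split de3_cond (fun t => (head 0 t).-1 \in t)) E3.
rewrite (count_split _ (fun s => odd (head 0 s))) count_odd_head.
rewrite (count_split (predI _ _) (fun s => (head 0 s).-1 \in s)).
by rewrite -count_even_head_pred_mem addnA (addnC (count _ (partitions (n + 2)))).
Qed.

Definition count_parts_le (P : pred (seq nat)) (j m : nat) :=
  count (fun s => all (fun x => x <= j) s && P s) (partitions m).

Lemma count_parts_le0 (P : pred (seq nat)) m : P [::] -> count_parts_le P 0 m = (m == 0).
Proof.
move=> P0; case: m => [|m]; first by rewrite /count_parts_le /partitions /= P0.
rewrite /count_parts_le /= -[RHS](count_pred0 (partitions m.+1)); apply: eq_in_count.
case=> [|x s]; rewrite mem_partitions ?is_partition_cons //= => /andP[x0 _].
by rewrite leqn0 (gtn_eqF x0).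
Qed.

Lemma count_parts_le_id (P : pred (seq nat)) j m :
  m <= j -> count_parts_le P j m = count P (partitions m).
Proof.
move=> mj; apply: eq_in_count => s; rewrite mem_partitions => /and3P[_ _ /eqP sm].
by rewrite (_ : all _ s) //; apply/allP => x /mem_leq_sumn; lia.
Qed.

Lemma count_parts_le_rec (P : pred (seq nat)) j m : 0 < j ->
  count_parts_le P j m =
  count_parts_le P j.-1 m +
  (if j <= m then count_parts_le (fun t => P (j :: t)) j (m - j) else 0).
Proof.
move=> j0; rewrite /count_parts_le (count_split _ (fun s => j \in s)) addnC.
congr (_ + _).
  apply: eq_count => s /=; rewrite -(all_leq_pred s j0).
  by case: (all _ s); case: (j \in s); case: (P s).
case: leqP => [jm | mj]; last first.
  rewrite -[RHS](count_pred0 (partitions m)); apply: eq_in_count => s.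
  rewrite mem_partitions => /and3P[_ _ /eqP sm] /=.
  by case: (boolP (j \in s)) => [/mem_leq_sumn | _]; [lia | rewrite andbF].
symmetry; apply: (count_partitions_bij (f := cons j) (g := behead)) => [t pt | [|a r]].
- case/andP=> tj Pt; split=> //=; rewrite ?mem_head ?leqnn ?tj ?Pt //.
  move: (pt) => /and3P[_ _ /eqP tsum].
  by rewrite is_partition_cons j0 tj tsum pt subnKC ?eqxx.
- by move=> _ /andP[].
- rewrite is_partition_cons => /and4P[_ ra pr /eqP ->].
  move=> /andP[/andP[/= /andP[aj rj] Pa] ja].
  have {ja} aE : a = j by move: ja; rewrite inE => /orP[/eqP // | /(allP ra)]; lia.
  by subst a; rewrite addKn rj Pa.
Qed.

Section Truncation.
Variables (R : nzRingType) (M : nat).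
Implicit Types p q r : {poly R}.
Local Open Scope ring_scope.

Lemma take_polyMl p q : take_poly M (take_poly M p * q) = take_poly M (p * q).
Proof.
apply/polyP => i; rewrite !coef_take_poly !coefM; case: ltnP => // iM.
by apply: eq_bigr => k _; rewrite coef_take_poly (leq_ltn_trans _ iM) // -ltnS.
Qed.

Lemma take_polyMr p q : take_poly M (p * take_poly M q) = take_poly M (p * q).
Proof.
apply/polyP => i; rewrite !coef_take_poly !coefMr; case: ltnP => // iM.
by apply: eq_bigr => k _; rewrite coef_take_poly (leq_ltn_trans _ iM) // -ltnS.
Qed.

Definition eqmodX p q := take_poly M p = take_poly M q.

#[global] Instance eqmodX_equiv : Equivalence eqmodX.
Proof. by split; rewrite /eqmodX; [move=> p | move=> p q -> | move=> p q r ->]. Qed.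

#[global] Instance eqmodX_mul : Proper (eqmodX ==> eqmodX ==> eqmodX) *%R.
Proof.
move=> p p' pp' q q' qq'; rewrite /eqmodX.
by rewrite -take_polyMl pp' take_polyMl -take_polyMr qq' take_polyMr.
Qed.

Lemma eqmodX_mul1subX p k : (M <= k)%N -> eqmodX (p * (1 - 'X^k)) p.
Proof.
move=> Mk; rewrite /eqmodX mulrBr mulr1 raddfB /= take_polyMXn.
by rewrite (eqP Mk) take_poly0l mul0r subr0.
Qed.

Lemma eqmodX_mulr_cancel p q r : r`_0 = 1 -> eqmodX (p * r) (q * r) -> eqmodX p q.
Proof.
move=> r01 pq; apply/polyP => i; rewrite !coef_take_poly; case: ltnP => // iM.
elim/ltn_ind: i iM => i IH iM.
have := congr1 (fun s : {poly R} => s`_i) pq.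
rewrite /= !coef_take_poly iM !coefM !big_ord_recr /=.
rewrite subnn r01 !mulr1 (eq_bigr (fun k : 'I_i => q`_k * r`_(i - k))) => [/addrI // | k _].
by rewrite /= IH // (ltn_trans _ iM).
Qed.

Lemma eqmodX_coef p q i : eqmodX p q -> (i < M)%N -> p`_i = q`_i.
Proof.
by move=> pq iM; have := congr1 (fun s : {poly R} => s`_i) pq; rewrite /= !coef_take_poly iM.
Qed.

End Truncation.

Section QPochhammer.
Variable R : nzRingType.
Local Open Scope ring_scope.

Definition qpoch (k b : nat) : {poly R} := \prod_(i < b) (1 - 'X^(k * i.+1)).

Lemma qpochS k b : qpoch k b.+1 = qpoch k b * (1 - 'X^(k * b.+1)).
Proof. by rewrite /qpoch big_ord_recr. Qed.

Lemma coef0_qpoch k b : (0 < k)%N -> (qpoch k b)`_0 = 1.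
Proof.
move=> k0; elim: b => [|b IH]; first by rewrite /qpoch big_ord0 coef1.
have kb0 : (0 < k * b.+1)%N by rewrite muln_gt0 k0.
by rewrite qpochS coef0M IH coefB coef1 coefXn (ltn_eqF kb0) subr0 mul1r.
Qed.

Lemma qpoch_divS k d j : (0 < d)%N ->
  qpoch k (j.+1 %/ d) =
  qpoch k (j %/ d) * (if (d %| j.+1)%N then 1 - 'X^(k * (j.+1 %/ d)) else 1).
Proof.
move=> d0; rewrite divnS //; case: (d %| j.+1)%N; last by rewrite mulr1.
by rewrite add1n qpochS.
Qed.

Lemma eqmodX_qpoch M p k b c :
  (M <= k * b.+1)%N -> (b <= c)%N -> eqmodX M (p * qpoch k c) (p * qpoch k b).
Proof.
move=> Mb; elim: c => [|c IH]; first by rewrite leqn0 => /eqP->.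
rewrite leq_eqVlt => /orP[/eqP-> // | bc].
rewrite qpochS mulrA eqmodX_mul1subX; first exact: IH.
by rewrite (leq_trans Mb) // leq_mul2l bc orbT.
Qed.

End QPochhammer.
Arguments qpoch {R}.

Definition no_part_div4 (s : seq nat) := all (fun x => ~~ (4 %| x)) s.

Section PartitionGF.
Variable M : nat.
Local Open Scope ring_scope.

Definition partition_gf (P : pred (seq nat)) (j : nat) : {poly int} :=
  \poly_(i < M) (count_parts_le P j i)%:Z.

Lemma take_poly_partition_gf P j : take_poly M (partition_gf P j) = partition_gf P j.
Proof. exact/take_poly_id/size_poly. Qed.

Lemma partition_gf0 (P : pred (seq nat)) : P [::] -> partition_gf P 0 = take_poly M 1.
Proof.
move=> P0; apply/polyP => i; rewrite coef_poly coef_take_poly coef1.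
by case: (i < M)%N; rewrite // count_parts_le0 //; case: (i == 0)%N.
Qed.

Lemma partition_gf_rec (P Q : pred (seq nat)) j k : (0 < j)%N ->
  (forall t, all (fun x => x <= j)%N t && P (j :: t) = all (fun x => x <= k)%N t && Q t) ->
  eqmodX M (partition_gf P j) (partition_gf P j.-1 + partition_gf Q k * 'X^j).
Proof.
move=> j0 PQ; rewrite /eqmodX take_poly_partition_gf; apply/polyP => i.
rewrite coef_take_poly coefD coefMXn /partition_gf !coef_poly; case: ltnP => // iM.
rewrite count_parts_le_rec // ltnNge.
case: (leqP j i) => ji /=; last by rewrite addn0 addr0.
by rewrite (leq_ltn_trans (leq_subr j i) iM) PoszD; congr (_ + Posz _); apply: eq_count.
Qed.

Lemma partition_gf_mul1subX (P : pred (seq nat)) j : (0 < j)%N ->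
  (forall t, all (fun x => x <= j)%N t -> P (j :: t) = P t) ->
  eqmodX M (partition_gf P j * (1 - 'X^j)) (partition_gf P j.-1).
Proof.
move=> j0 PP; have := partition_gf_rec (P := P) (Q := P) (k := j) j0.
rewrite /eqmodX mulrBr mulr1 raddfB /= => -> => [|t]; first by rewrite raddfD addrK.
by case: (boolP (all _ t)) => // /PP.
Qed.

Lemma partition_gf_pred0 k : partition_gf pred0 k = 0.
Proof.
apply/polyP => i; rewrite coef_poly coef0 /count_parts_le.
case: ifP => // _; rewrite (eq_count (a2 := pred0)) ?count_pred0 // => s.
by rewrite andbF.
Qed.

Lemma no_part_div4_gf_dvd j : (0 < j)%N -> (4 %| j)%N ->
  partition_gf no_part_div4 j = partition_gf no_part_div4 j.-1.
Proof.
move=> j0 j4; have := partition_gf_rec (P := no_part_div4) (Q := pred0) (k := j) j0.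
rewrite /eqmodX partition_gf_pred0 mul0r addr0 !take_poly_partition_gf; apply.
by move=> t; rewrite /no_part_div4 /= j4 !andbF.
Qed.

Lemma no_part_div4_gf_ndvd j : (0 < j)%N -> ~~ (4 %| j)%N ->
  eqmodX M (partition_gf no_part_div4 j * (1 - 'X^j)) (partition_gf no_part_div4 j.-1).
Proof.
by move=> j0 j4; apply: partition_gf_mul1subX => // t _; rewrite /no_part_div4 /= j4.
Qed.

Lemma uniq_even_parts_gf_odd j : odd j ->
  eqmodX M (partition_gf uniq_even_parts j * (1 - 'X^j))
           (partition_gf uniq_even_parts j.-1).
Proof.
move=> oj; apply: partition_gf_mul1subX => [|t _]; first by case: j oj.
by rewrite uniq_even_parts_cons oj.
Qed.

Lemma uniq_even_parts_gf_even j : (0 < j)%N -> ~~ odd j ->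
  eqmodX M (partition_gf uniq_even_parts j)
           (partition_gf uniq_even_parts j.-1 * (1 + 'X^j)).
Proof.
move=> j0 ej; rewrite mulrDr mulr1; apply: partition_gf_rec => // t.
by rewrite uniq_even_parts_cons ej andbA all_leq_pred.
Qed.

Lemma no_part_div4_uniq_even_parts_gf j :
  eqmodX M (partition_gf no_part_div4 j * qpoch 4 (j %/ 2))
           (partition_gf uniq_even_parts j * qpoch 4 (j %/ 4)).
Proof.
elim: j => [|j IH]; first by rewrite !partition_gf0.
rewrite !qpoch_divS //.
case: (boolP (odd j.+1)) => [oJ | eJ].
  have nJ4 : ~~ (4 %| j.+1)%N by lia.
  rewrite dvdn2 oJ (negbTE nJ4) !mulr1.
  apply: (eqmodX_mulr_cancel (r := 1 - 'X^(j.+1))); first by rewrite coefB coef1 coefXn.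
  rewrite mulrAC no_part_div4_gf_ndvd // IH.
  by rewrite [X in eqmodX _ _ X]mulrAC uniq_even_parts_gf_odd.
have x2 : 'X^(4 * (j.+1 %/ 2)) = 'X^(j.+1) * 'X^(j.+1) :> {poly int}.
  by rewrite -exprD; congr (_ ^+ _); lia.
rewrite dvdn2 eJ x2 uniq_even_parts_gf_even // succnK.
have x21 : 1 - 'X^(j.+1) * 'X^(j.+1) = (1 - 'X^(j.+1)) * (1 + 'X^(j.+1)) :> {poly int}.
  by ring.
case: (boolP (4 %| j.+1)%N) => [J4 | nJ4].
  rewrite mulnC divnK // no_part_div4_gf_dvd // succnK mulrA IH x21.
  by rewrite /eqmodX; congr take_poly; ring.
rewrite mulr1 x21 [qpoch _ _ * _]mulrA [qpoch _ _ * _]mulrC !mulrA.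
by rewrite no_part_div4_gf_ndvd // IH mulrAC.
Qed.

End PartitionGF.

Lemma p_no4_uniq_even_parts n : p_no4 n = count uniq_even_parts (partitions n).
Proof.
have Q0 : ((qpoch 4 (n %/ 4))`_0 = 1 :> int)%R by rewrite coef0_qpoch.
have inv := no_part_div4_uniq_even_parts_gf n.+1 n.
rewrite (@eqmodX_qpoch _ n.+1 _ 4 (n %/ 4) (n %/ 2)) in inv; [|lia|lia].
have /eqmodX_coef/(_ (ltnSn n)) := eqmodX_mulr_cancel Q0 inv.
by rewrite !coef_poly ltnSn => -[]; rewrite !count_parts_le_id.
Qed.

Theorem corollary3 (n : nat) : 1 < n -> DE3 (n + 2) + DE3 (n - 1) = p_no4 n.
Proof.
by move=> /ltnW n0; rewrite p_no4_uniq_even_parts count_uniq_even_parts_DE3.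
Qed.
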